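(* Let $M$ be a matroid, let $S,T$ be disjoint subsets of $E(M)$, let $k:=\kappa_M(S,T)$, and let $F\subseteq E(M)-(S\cup T)$ be a set of elements none of which is flexible with respect to $(S,T)$. Let $t:=|F|$. Then there exist an ordering $(f_1,\dots,f_t)$ of $F$ and a sequence $(A_1,\dots,A_t)$ of subsets of $E(M)$ such that: (1) for each $i\in\{1,\dots,t\}$, $S\subseteq A_i\subseteq E(M)-T$ and $\lambda_M(A_i)=k$; (2) $A_i\subseteq A_{i+1}$ for each $i\in\{1,\dots,t-1\}$; (3) $A_i\cap F=\{f_1,\dots,f_i\}$ for each $i\in\{1,\dots,t\}$; (4) for each $i$, $f_i\in \mathrm{cl}_M(A_i-f_i)\cap\mathrm{cl}_M(E(M)-A_i)$ or $f_i\in\mathrm{cl}^*_M(A_i-f_i)\cap\mathrm{cl}^*_M(E(M)-A_i)$.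
   Context: For a matroid $M$ with ground set $E$, $\lambda_M(X):=r_M(X)+r_M(E-X)-r(M)$, and for disjoint $S,T\subseteq E$, $\kappa_M(S,T):=\min\{\lambda_M(X):S\subseteq X\subseteq E-T\}$. $\mathrm{cl}_M$ is the closure operator and $\mathrm{cl}^*_M$ the closure operator of the dual matroid $M^*$. For $e\in E-(S\cup T)$: $e$ is deletable with respect to $(S,T)$ if $\kappa_{M\setminus e}(S,T)=\kappa_M(S,T)$; contractible with respect to $(S,T)$ if $\kappa_{M/e}(S,T)=\kappa_M(S,T)$; flexible with respect to $(S,T)$ if it is both deletable and contractible. *)

From mathcomp Require Import all_boot.
Set Implicit Arguments. Unset Strict Implicit. Unset Printing Implicit Defensive.

(* A matroid on ground set E (a subset of a finType U), given by its rank
   function r; only the values of r on subsets of E matter.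
   Standard rank axioms (R1)-(R3). *)
Definition is_matroid (U : finType) (E : {set U}) (r : {set U} -> nat) : Prop :=
  [/\ (forall X : {set U}, X \subset E -> r X <= #|X|),
      (forall X Y : {set U}, X \subset Y -> Y \subset E -> r X <= r Y) &
      (forall X Y : {set U}, X \subset E -> Y \subset E ->
         r (X :|: Y) + r (X :&: Y) <= r X + r Y)].

Section MatroidDefs.
Variables (U : finType) (E : {set U}) (r : {set U} -> nat).

(* lambda_M(X) = r(X) + r(E-X) - r(M)  (never truncated for a matroid) *)
Definition lambda (X : {set U}) : nat := r X + r (E :\: X) - r E.

(* kappa_M(S,T) = min { lambda_M(X) : S ⊆ X ⊆ E - T }
   (the seed lambda S is itself a candidate when S ⊆ E, S ∩ T = ∅) *)
Definition kappa (S T : {set U}) : nat :=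
  \big[minn/lambda S]_(X : {set U} | (S \subset X) && (X \subset E :\: T)) lambda X.

Definition cl (X : {set U}) : {set U} := [set x in E | r (x |: X) == r X].

Definition rdual (X : {set U}) : nat := #|X| + r (E :\: X) - r E.

Definition cldual (X : {set U}) : {set U} :=
  [set x in E | rdual (x |: X) == rdual X].
End MatroidDefs.

(* deletion M \ e : ground set E - e, same rank *)
(* contraction M / e : ground set E - e, rank X |-> r(X ∪ e) - r({e}) *)
Definition con_rank (U : finType) (r : {set U} -> nat) (e : U) : {set U} -> nat :=
  fun X => r (e |: X) - r [set e].

Definition deletable (U : finType) (E : {set U}) (r : {set U} -> nat)
  (S T : {set U}) (e : U) : Prop :=
  kappa (E :\ e) r S T = kappa E r S T.

Definition contractible (U : finType) (E : {set U}) (r : {set U} -> nat)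
  (S T : {set U}) (e : U) : Prop :=
  kappa (E :\ e) (con_rank r e) S T = kappa E r S T.

Definition flexible (U : finType) (E : {set U}) (r : {set U} -> nat)
  (S T : {set U}) (e : U) : Prop :=
  deletable E r S T e /\ contractible E r S T e.

From mathcomp Require Import all_boot zify.
Set Implicit Arguments. Unset Strict Implicit. Unset Printing Implicit Defensive.

(* Call [X] a minimum separation if [S <= X <= E - T] and [lambda X = kappa(S, T)].
   By submodularity of [lambda], minimum separations are closed under union and
   intersection.  If [g] is not deletable (resp. not contractible), then [kappa]
   drops in [M \ g] (resp. [M / g]), and a minimizer [X] there gives minimum
   separations [X] and [X + g] of [M] with [g] not in [X].  So [g] has a least
   minimum separation [D g] containing it, and [D g - g] is again one; hence any
   other [f] in [F] lying in [D g] has [D f] strictly smaller than [D g].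
   Ordering [F] by [|D f|] and setting [A_i = D f_1 + ... + D f_i] gives the
   chain, and [lambda (A_i - f_i) = lambda A_i = kappa] puts [f_i] in the guts
   or the coguts of [A_i]. *)

(* Proves a set equation or inclusion by deciding membership of a generic
   element [z], using the inclusions and memberships available in the context. *)
Ltac set_dec :=
  (apply/setP || apply/subsetP); let z := fresh "z" in move=> z; rewrite ?inE;
  repeat match goal with H : is_true (?A \subset ?B) |- _ =>
    move: (subsetP H z); rewrite ?inE; clear H end;
  repeat match goal with |- context [?a == ?g] =>
    case: (eqVneq a g) => [->|?]; rewrite ?eqxx end;
  repeat match goal with H : is_true (?y \in ?A) |- context [?y \in ?A] =>
    rewrite H end;
  repeat match goal with H : is_true (~~ (?y \in ?A)) |- context [?y \in ?A] =>
    rewrite (negbTE H) end;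
  repeat match goal with |- context [?y \in ?A] => case: (y \in A) end;
  simpl; intros;
  repeat match goal with
         | H : is_true true -> is_true false |- _ => discriminate (H isT)
         | H : is_true false |- _ => discriminate H end;
  done.

Section Rank.
Variables (U : finType) (E : {set U}) (r : {set U} -> nat).
Hypothesis hM : is_matroid E r.

Lemma rank0 : r set0 = 0.
Proof.
by case: hM => rk_card _ _; have := rk_card set0 (sub0set _); rewrite cards0; lia.
Qed.

Lemma rank_mono (X Y : {set U}) : X \subset Y -> Y \subset E -> r X <= r Y.
Proof. by case: hM => _ rk_mono _; apply: rk_mono. Qed.

Lemma rank_submod (X Y : {set U}) : X \subset E -> Y \subset E ->
  r (X :|: Y) + r (X :&: Y) <= r X + r Y.
Proof. by case: hM => _ _ rk_submod; apply: rk_submod. Qed.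

Lemma rank1_le1 g : g \in E -> r [set g] <= 1.
Proof.
by case: hM => rk_card _ _ gE; rewrite -(cards1 g); apply: rk_card; rewrite sub1set.
Qed.

Lemma rankU1_le_add (Y : {set U}) g : Y \subset E -> g \in E ->
  r (g |: Y) <= r Y + r [set g].
Proof.
move=> YE gE; have := rank_submod (X := [set g]) (Y := Y); rewrite sub1set.
by move=> /(_ gE YE); lia.
Qed.

Lemma rankU1_le (Y : {set U}) g : Y \subset E -> g \in E -> r (g |: Y) <= (r Y).+1.
Proof. by move=> YE gE; have := rankU1_le_add YE gE; have := rank1_le1 gE; lia. Qed.

Lemma rank1_le (Y : {set U}) g : Y \subset E -> g \in Y -> r [set g] <= r Y.
Proof. by move=> YE gY; apply: rank_mono; rewrite ?sub1set. Qed.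

Lemma rank_le_compl (X : {set U}) : X \subset E -> r E <= r X + r (E :\: X).
Proof.
move=> XE; have := rank_submod XE (subsetDl E X).
have -> : X :|: (E :\: X) = E by set_dec.
have -> : X :&: (E :\: X) = set0 by set_dec.
by rewrite rank0; lia.
Qed.

Lemma rank_setD1 (B : {set U}) g : B \subset E -> g \in B ->
  r (B :\ g) + r E <= r B + r (E :\ g).
Proof.
move=> BE gB; have := rank_submod BE (subsetDl E [set g]).
have -> : B :|: (E :\ g) = E by set_dec.
have -> : B :&: (E :\ g) = B :\ g by set_dec.
lia.
Qed.

Lemma lambda_submod (A B : {set U}) : A \subset E -> B \subset E ->
  lambda E r (A :|: B) + lambda E r (A :&: B) <= lambda E r A + lambda E r B.
Proof.
move=> AE BE; rewrite /lambda.
have := rank_submod AE BE; have := rank_submod (subsetDl E A) (subsetDl E B).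
rewrite -setDUr -setDIr.
have := rank_le_compl (subset_trans (subsetIl A B) AE).
have := rank_le_compl AE; have := rank_le_compl BE.
have := rank_le_compl (X := A :|: B); rewrite subUset AE BE => /(_ isT).
lia.
Qed.

(* [lambda (A - f) = lambda A] forces [f] to be spanned on both sides, either in
   [M] or in [M*], according to whether removing [f] drops the rank of [A]. *)
Lemma guts_or_coguts_of_lambdaD1 (A : {set U}) f : A \subset E -> f \in A ->
  lambda E r (A :\ f) = lambda E r A ->
  f \in cl E r (A :\ f) :&: cl E r (E :\: A)
  \/ f \in cldual E r (A :\ f) :&: cldual E r (E :\: A).
Proof.
move=> AE fA; have fE : f \in E := subsetP AE f fA.
have AfE : A :\ f \subset E := subset_trans (subsetDl _ _) AE.
have e1 : f |: (A :\ f) = A by set_dec.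
have e2 : E :\: (A :\ f) = f |: (E :\: A) by set_dec.
have e3 : E :\: (f |: (E :\: A)) = A :\ f by set_dec.
have e4 : E :\: (E :\: A) = A by set_dec.
rewrite /lambda e2 => hl.
have m1 : r (A :\ f) <= r A by apply: rank_mono; [apply: subsetDl | done].
have m2 : r A <= (r (A :\ f)).+1 by have := rankU1_le AfE fE; rewrite e1.
have m3 : r (E :\: A) <= r (f |: (E :\: A)).
  by apply: rank_mono; [apply: subsetUr | rewrite subUset sub1set fE subsetDl].
have m4 : r (f |: (E :\: A)) <= (r (E :\: A)).+1 := rankU1_le (subsetDl _ _) fE.
have n1 := rank_le_compl AE; have n2 := rank_le_compl AfE; rewrite e2 in n2.
have c1 := cardsD1 f A; rewrite fA in c1.
have c2 := cardsU1 f (E :\: A); rewrite !inE fA /= in c2.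
case: (eqVneq (r A) (r (A :\ f))) => rA.
  left; rewrite /cl !inE fE e1 /= rA eqxx /=; apply/eqP; lia.
right; rewrite /cldual !inE fE /rdual e1 e3 e4 e2 /=.
by apply/andP; split; apply/eqP; lia.
Qed.

End Rank.

Section SingleElementMinors.
Variables (U : finType) (E : {set U}) (r : {set U} -> nat) (g : U).
Hypotheses (hM : is_matroid E r) (gE : g \in E).

Lemma lambda_deleteD1_le (Y : {set U}) : Y \subset E ->
  lambda (E :\ g) r (Y :\ g) <= lambda E r Y.
Proof.
move=> YE; have Ycomp := rank_le_compl hM YE; rewrite /lambda.
case: (boolP (g \in Y)) => gY.
  have -> : (E :\ g) :\: (Y :\ g) = E :\: Y by set_dec.
  by have := rank_setD1 hM YE gY; lia.
have -> : Y :\ g = Y by set_dec.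
have -> : (E :\ g) :\: Y = (E :\: Y) :\ g by set_dec.
have gEY : g \in E :\: Y by rewrite inE gY gE.
by have := rank_setD1 hM (subsetDl E Y) gEY; lia.
Qed.

Lemma lambda_le_delete (X : {set U}) : X \subset E :\ g ->
  lambda E r X <= (lambda (E :\ g) r X).+1 /\
  lambda E r (g |: X) <= (lambda (E :\ g) r X).+1.
Proof.
move=> XEg; have XE : X \subset E := subset_trans XEg (subsetDl _ _).
have EgX_E : (E :\ g) :\: X \subset E by set_dec.
have rEg : r (E :\ g) <= r E := rank_mono hM (subsetDl _ _) (subxx _).
have rgX := rankU1_le hM XE gE; have rEX := rankU1_le hM EgX_E gE.
have eEX : E :\: X = g |: ((E :\ g) :\: X) by set_dec.
rewrite /lambda eEX.
have -> : E :\: (g |: X) = (E :\ g) :\: X by set_dec.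
by split; lia.
Qed.

Lemma lambda_contractD1_le (Y : {set U}) : Y \subset E ->
  lambda (E :\ g) (con_rank r g) (Y :\ g) <= lambda E r Y.
Proof.
move=> YE; have Ycomp := rank_le_compl hM YE; rewrite /lambda /con_rank.
have -> : g |: (Y :\ g) = g |: Y by set_dec.
have -> : g |: ((E :\ g) :\: (Y :\ g)) = g |: (E :\: Y) by set_dec.
have -> : g |: (E :\ g) = E by set_dec.
have rgE : r [set g] <= r E := rank1_le hM (subxx E) gE.
case: (boolP (g \in Y)) => gY.
  have -> : g |: Y = Y by set_dec.
  have := rank1_le hM YE gY; have := rankU1_le_add hM (subsetDl E Y) gE; lia.
have -> : g |: (E :\: Y) = E :\: Y by set_dec.
have gEY : g \in E :\: Y by rewrite inE gY gE.
have := rank1_le hM (subsetDl E Y) gEY; have := rankU1_le_add hM YE gE; lia.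
Qed.

Lemma lambda_le_contract (X : {set U}) : X \subset E :\ g ->
  lambda E r X <= (lambda (E :\ g) (con_rank r g) X).+1 /\
  lambda E r (g |: X) <= (lambda (E :\ g) (con_rank r g) X).+1.
Proof.
move=> XEg; have XE : X \subset E := subset_trans XEg (subsetDl _ _).
have gX : g \notin X by apply/negP => /(subsetP XEg); rewrite !inE eqxx.
have gXE : g |: X \subset E by rewrite subUset sub1set gE XE.
rewrite /lambda /con_rank.
have -> : g |: ((E :\ g) :\: X) = E :\: X by set_dec.
have -> : g |: (E :\ g) = E by set_dec.
have gEX : g \in E :\: X by rewrite inE gX gE.
have rg1 := rank1_le1 hM gE.
have rgE : r [set g] <= r E := rank1_le hM (subxx E) gE.
have rgEX := rank1_le hM (subsetDl E X) gEX.
have rggX := rank1_le hM gXE (setU11 g X).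
have rXgX : r X <= r (g |: X) := rank_mono hM (subsetUr _ _) gXE.
have EgX_EX : E :\: (g |: X) \subset E :\: X by set_dec.
have rEgX := rank_mono hM EgX_EX (subsetDl E X).
by split; lia.
Qed.

End SingleElementMinors.

Lemma bigmin_leq_seq (I : eqType) (s : seq I) (P : pred I) (F : I -> nat) a x :
  x \in s -> P x -> \big[minn/a]_(i <- s | P i) F i <= F x.
Proof.
elim: s => // y s IHs; rewrite inE big_cons => /orP[/eqP-> -> | xs Px].
  exact: geq_minl.
by case: (P y); [apply: leq_trans (geq_minr _ _) (IHs xs Px) | apply: IHs].
Qed.

Section Kappa.
Variables (U : finType) (E : {set U}) (r : {set U} -> nat) (S T : {set U}).

Lemma kappa_le (X : {set U}) : S \subset X -> X \subset E :\: T ->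
  kappa E r S T <= lambda E r X.
Proof.
by move=> SX XET; apply: bigmin_leq_seq; rewrite ?mem_index_enum ?SX.
Qed.

Lemma kappa_attained : S \subset E :\: T ->
  exists X : {set U}, [/\ S \subset X, X \subset E :\: T & kappa E r S T = lambda E r X].
Proof.
move=> SET; rewrite /kappa.
apply: (big_ind (fun v => exists X : {set U},
  [/\ S \subset X, X \subset E :\: T & v = lambda E r X])); first by exists S.
- move=> _ _ [X [SX XET ->]] [Y [SY YET ->]].
  by case: (leqP (lambda E r X) (lambda E r Y)) => _; [exists X | exists Y].
- by move=> X /andP[SX XET]; exists X.
Qed.

End Kappa.

Section MinSep.
Variables (U : finType) (E : {set U}) (r : {set U} -> nat) (S T : {set U}).

Definition min_sep (X : {set U}) : bool :=
  [&& S \subset X, X \subset E :\: T & lambda E r X == kappa E r S T].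

(* [r'] is the rank function of a single-element deletion or contraction [N]
   of [M] on [E - g]; the two hypotheses are all that is used about [N]. *)
Lemma min_sep_step_of_kappa_neq (r' : {set U} -> nat) g :
  S \subset E :\: T -> g \in E -> g \notin S -> g \notin T ->
  (forall Y : {set U}, Y \subset E -> lambda (E :\ g) r' (Y :\ g) <= lambda E r Y) ->
  (forall X : {set U}, X \subset E :\ g ->
     lambda E r X <= (lambda (E :\ g) r' X).+1 /\
     lambda E r (g |: X) <= (lambda (E :\ g) r' X).+1) ->
  kappa (E :\ g) r' S T != kappa E r S T ->
  exists X, [/\ min_sep X, min_sep (g |: X) & g \notin X].
Proof.
move=> SET gE gS gT lam_le lam_ge kappa_neq.
have [Y [SY YET kY]] := kappa_attained r SET.
have SETg : S \subset (E :\ g) :\: T by set_dec.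
have kappa_lt : kappa (E :\ g) r' S T < kappa E r S T.
  rewrite ltn_neqAle kappa_neq kY /=.
  have SYg : S \subset Y :\ g by set_dec.
  have YgET : Y :\ g \subset (E :\ g) :\: T by set_dec.
  apply: leq_trans (kappa_le r' SYg YgET) (lam_le _ _); set_dec.
have [X [SX XETg kX]] := kappa_attained r' SETg.
have XEg : X \subset E :\ g by set_dec.
have [lamX lamgX] := lam_ge X XEg.
have XET : X \subset E :\: T by set_dec.
have gXET : g |: X \subset E :\: T by set_dec.
have SgX : S \subset g |: X by set_dec.
have lam_eq Z : lambda E r Z <= (lambda (E :\ g) r' X).+1 ->
    kappa E r S T <= lambda E r Z -> lambda E r Z == kappa E r S T.
  by move=> le_lam ge_lam; rewrite eqn_leq ge_lam andbT (leq_trans le_lam) // -kX.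
exists X; rewrite /min_sep SX XET SgX gXET !lam_eq ?kappa_le //; split=> //.
by apply/negP => /(subsetP XEg); rewrite !inE eqxx.
Qed.

End MinSep.

Section MinSepLattice.
Variables (U : finType) (E : {set U}) (r : {set U} -> nat) (S T : {set U}).
Hypothesis hM : is_matroid E r.

Local Notation min_sep := (min_sep E r S T).

Lemma min_sepUI (A B : {set U}) : min_sep A -> min_sep B ->
  min_sep (A :|: B) && min_sep (A :&: B).
Proof.
have squeeze a b k : a + b <= k + k -> k <= b -> k <= a -> (a == k) && (b == k).
  by move=> *; apply/andP; split; apply/eqP; lia.
move=> /and3P[SA AET /eqP kA] /and3P[SB BET /eqP kB].
have AE : A \subset E := subset_trans AET (subsetDl _ _).
have BE : B \subset E := subset_trans BET (subsetDl _ _).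
have UET : A :|: B \subset E :\: T by rewrite subUset AET BET.
have IET : A :&: B \subset E :\: T := subset_trans (subsetIl _ _) AET.
have SU : S \subset A :|: B := subset_trans SA (subsetUl _ _).
have SI : S \subset A :&: B by rewrite subsetI SA SB.
have := kappa_le r SU UET; have := kappa_le r SI IET.
have := lambda_submod hM AE BE; rewrite kA kB.
by rewrite /min_sep SU UET SI IET /=; apply: squeeze.
Qed.

Lemma min_sepU (A B : {set U}) : min_sep A -> min_sep B -> min_sep (A :|: B).
Proof. by move=> sA sB; case/andP: (min_sepUI sA sB). Qed.

Lemma min_sepI (A B : {set U}) : min_sep A -> min_sep B -> min_sep (A :&: B).
Proof. by move=> sA sB; case/andP: (min_sepUI sA sB). Qed.

Lemma min_sepU_bigcup (I : finType) (P : pred I) (G : I -> {set U}) X :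
  min_sep X -> (forall i, P i -> min_sep (G i)) ->
  min_sep (X :|: \bigcup_(i | P i) G i).
Proof.
move=> sX sG; apply: (big_ind (fun Y => min_sep (X :|: Y))); rewrite ?setU0 //.
  by move=> Y Z sY sZ; rewrite setUUr; apply: min_sepU.
by move=> i /sG; apply: min_sepU.
Qed.

Lemma min_sepI_bigcap (I : finType) (P : pred I) (G : I -> {set U}) X :
  min_sep X -> (forall i, P i -> min_sep (G i)) ->
  min_sep (X :&: \bigcap_(i | P i) G i).
Proof.
move=> sX sG; apply: (big_ind (fun Y => min_sep (X :&: Y))); rewrite ?setIT //.
  by move=> Y Z sY sZ; rewrite setIIr; apply: min_sepI.
by move=> i /sG; apply: min_sepI.
Qed.

Lemma nonflexible_min_sep_step g :
  S \subset E :\: T -> g \in E -> g \notin S -> g \notin T ->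
  ~ flexible E r S T g ->
  exists X, [/\ min_sep X, min_sep (g |: X) & g \notin X].
Proof.
move=> SET gE gS gT nflex.
case: (eqVneq (kappa (E :\ g) r S T) (kappa E r S T)) => [del | ndel].
  case: (eqVneq (kappa (E :\ g) (con_rank r g) S T) (kappa E r S T)) => [con | ncon].
    by case: nflex.
  apply: min_sep_step_of_kappa_neq ncon => //.
  - exact: lambda_contractD1_le.
  - exact: lambda_le_contract.
apply: min_sep_step_of_kappa_neq ndel => //.
- exact: lambda_deleteD1_le.
- exact: lambda_le_delete.
Qed.

(* Equal to [setT] when no minimum separation contains [g]. *)
Definition min_sep_hull (g : U) : {set U} := \bigcap_(X | min_sep X && (g \in X)) X.

Lemma min_sep_hull_sep g X : min_sep X -> g \in X ->
  min_sep (min_sep_hull g) /\ g \in min_sep_hull g.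
Proof.
move=> sX gX; split; last by apply/bigcapP => Y /andP[].
rewrite /min_sep_hull (bigD1 X) /=; last by rewrite sX gX.
by apply: min_sepI_bigcap => // Y /andP[/andP[]].
Qed.

Lemma min_sep_hullD1 g X : min_sep X -> min_sep (g |: X) -> g \notin X ->
  min_sep (min_sep_hull g :\ g).
Proof.
move=> sX sgX gX; have [sH _] := min_sep_hull_sep sgX (setU11 g X).
have sub : min_sep_hull g \subset g |: X by apply: bigcap_inf; rewrite sgX setU11.
suff -> : min_sep_hull g :\ g = min_sep_hull g :&: X by apply: min_sepI.
by set_dec.
Qed.

Lemma card_min_sep_hull_lt g x :
  min_sep (min_sep_hull g :\ g) -> g \in min_sep_hull g ->
  x \in min_sep_hull g -> x != g -> #|min_sep_hull x| < #|min_sep_hull g|.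
Proof.
move=> sHg gH xH xg.
have sub : min_sep_hull x \subset min_sep_hull g :\ g.
  by apply: bigcap_inf; rewrite sHg !inE xg xH.
by have := subset_leq_card sub; have := cardsD1 g (min_sep_hull g); rewrite gH; lia.
Qed.

End MinSepLattice.

Section PrefixUnion.
Variables (U : finType) (t : nat) (f : 'I_t -> U) (D : U -> {set U}).
Hypotheses (mem_D : forall i, f i \in D (f i))
           (D_prec : forall i j, f j \in D (f i) -> j != i -> j < i).

Definition prefix_cup (i : 'I_t) : {set U} := \bigcup_(j : 'I_t | j <= i) D (f j).

Lemma prefix_cup_mono (i j : 'I_t) : i <= j -> prefix_cup i \subset prefix_cup j.
Proof.
by move=> le_ij; apply/bigcupsP => m le_mi; apply: bigcup_sup; apply: leq_trans le_ij.
Qed.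

Lemma prefix_cupE (i : 'I_t) :
  prefix_cup i = D (f i) :|: \bigcup_(j : 'I_t | j < i) D (f j).
Proof.
rewrite /prefix_cup (bigD1 i) //=; congr (_ :|: _).
by apply: eq_bigl => j; rewrite ltn_neqAle andbC.
Qed.

Lemma prefix_cupD1 (i : 'I_t) :
  prefix_cup i :\ f i = (D (f i) :\ f i) :|: \bigcup_(j : 'I_t | j < i) D (f j).
Proof.
have fi_notin : f i \notin \bigcup_(j : 'I_t | j < i) D (f j).
  apply/bigcupP => -[j lt_ji /D_prec lt_ij].
  have ne_ij : i != j by apply: contraTneq lt_ji => ->; rewrite ltnn.
  by have := lt_ij ne_ij; rewrite ltnNge ltnW.
rewrite prefix_cupE setDUl; congr (_ :|: _).
by apply/setDidPl; rewrite disjoint_sym disjoints1.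
Qed.

Lemma prefix_cup_image (i : 'I_t) :
  prefix_cup i :&: [set f j | j in 'I_t] = [set f j | j in 'I_t & j <= i].
Proof.
apply/setP => x; apply/setIP/imsetP => [[xP /imsetP[j _ ejx]] | [j le_ji ->]].
  move: xP; rewrite ejx => /bigcupP[m le_mi fjD].
  exists j => //; rewrite inE /=.
  case: (eqVneq j m) => [-> // | ne_jm]; exact: leq_trans (ltnW (D_prec fjD ne_jm)) le_mi.
split; last exact: imset_f.
by apply/bigcupP; exists j; rewrite // inE in le_ji.
Qed.

End PrefixUnion.

Lemma exists_enum_sorted (T : finType) (F : {set T}) (w : T -> nat) :
  exists f : 'I_#|F| -> T,
    [/\ injective f, [set f i | i in 'I_#|F|] = F &
        forall i j, w (f i) < w (f j) -> i < j].
Proof.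
pose s := Tuple (sort_tupleP (relpre w leq) (enum_tuple F)).
have mem_s x : (x \in s) = (x \in F) by rewrite mem_sort mem_enum.
have sorted_s : sorted (relpre w leq) s.
  by apply: sort_sorted => x y; apply: leq_total.
have le_w_trans : transitive (relpre w leq) by move=> y x z; apply: leq_trans.
exists (tnth s); split.
- by apply/tuple_uniqP; rewrite sort_uniq enum_uniq.
- apply/setP=> x; rewrite -mem_s; apply/imsetP/tnthP => [[i _ ->]|[i ->]];
    by exists i.
- move=> i j; apply: contraTT; rewrite -!leqNgt => le_ji.
  have x0 : T := tnth s i.
  rewrite !(tnth_nth x0).
  apply: (sorted_leq_nth le_w_trans) => //; first by move=> x /=.
  all: by rewrite inE size_tuple.
Qed.

Theorem theorem3p4 (U : finType) (E : {set U}) (r : {set U} -> nat)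
  (S T F : {set U}) :
  is_matroid E r ->
  S \subset E -> T \subset E -> [disjoint S & T] ->
  F \subset E :\: (S :|: T) ->
  (forall f, f \in F -> ~ flexible E r S T f) ->
  let k := kappa E r S T in
  let t := #|F| in
  exists (f : 'I_t -> U) (A : 'I_t -> {set U}),
    [/\ injective f /\ [set f i | i in 'I_t] = F,
        (forall i, [/\ S \subset A i, A i \subset E :\: T & lambda E r (A i) = k]),
        (forall i j : 'I_t, j = i.+1 :> nat -> A i \subset A j),
        (forall i, A i :&: F = [set f j | j in 'I_t & j <= i]) &
        (forall i, f i \in cl E r (A i :\ f i) :&: cl E r (E :\: A i)
                \/ f i \in cldual E r (A i :\ f i) :&: cldual E r (E :\: A i))].
Proof.
move=> hM SE _ dST FE nflex k t.
have SET : S \subset E :\: T by rewrite subsetD SE dST.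
pose D := min_sep_hull E r S T.
have hull_F g : g \in F ->
    [/\ min_sep E r S T (D g), g \in D g & min_sep E r S T (D g :\ g)].
  move=> gF; move: (subsetP FE g gF); rewrite !inE negb_or => /andP[/andP[gS gT] gE].
  have [X [sX sgX gX]] := nonflexible_min_sep_step hM SET gE gS gT (nflex g gF).
  have [sD gD] := min_sep_hull_sep hM sgX (setU11 g X).
  by split=> //; apply: (min_sep_hullD1 hM sX sgX gX).
have [f [f_inj f_im f_sorted]] := exists_enum_sorted F (fun x => #|D x|).
have fF i : f i \in F by rewrite -f_im imset_f.
have mem_D i : f i \in D (f i) by have [] := hull_F _ (fF i).
have D_prec i j : f j \in D (f i) -> j != i -> j < i.
  move=> fjD ne_ji; apply: f_sorted; have [_ fiD sDi] := hull_F _ (fF i).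
  by apply: card_min_sep_hull_lt fiD fjD _ => //; apply: contra_neq ne_ji => /f_inj.
pose A := prefix_cup f D.
have sepA i : min_sep E r S T (A i) /\ min_sep E r S T (A i :\ f i).
  have sepD (j : 'I_t) : j < i -> min_sep E r S T (D (f j)) by have [] := hull_F _ (fF j).
  rewrite /A (prefix_cupD1 D_prec) prefix_cupE; have [sDi _ sDi1] := hull_F _ (fF i).
  by split; apply: min_sepU_bigcup.
exists f, A; split=> //.
- by move=> i; have [/and3P[SA AET /eqP lamA] _] := sepA i.
- by move=> i j eq_ji; apply: prefix_cup_mono; rewrite eq_ji.
- by move=> i; rewrite -{1}f_im; apply: prefix_cup_image.
move=> i; have [/and3P[_ AET /eqP lamA] /and3P[_ _ /eqP lamA1]] := sepA i.
have fiA : f i \in A i by rewrite /A prefix_cupE inE mem_D.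
have AE : A i \subset E := subset_trans AET (subsetDl _ _).
by apply: (guts_or_coguts_of_lambdaD1 hM AE fiA); rewrite lamA lamA1.
Qed.
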